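(* Let $a$ be a real number. The inequality $S_{n,a}(x)>0$ holds for all integers $n\ge1$ and all real $x\in(0,\pi)$ if and only if $a\ge1$.
   Context: For a real number $a$ and integers $0\le m$, $\binom{m+a}{m}=\frac{(a+1)(a+2)\cdots(a+m)}{m!}$ (equal to $1$ when $m=0$). For an integer $n\ge1$, $S_{n,a}(x)=\sum_{j=1}^n\binom{n+a-j}{n-j}\sin(jx)$. *)

From Stdlib Require Import Reals Arith.
Open Scope R_scope.

Fixpoint rise (a : R) (m : nat) : R :=
  match m with
  | O => 1
  | S k => rise a k * (a + INR (S k))
  end.

(* Generalized binomial  binom(m+a, m) = (a+1)...(a+m)/m!  (= 1 when m = 0). *)
Definition gbinom (m : nat) (a : R) : R := rise a m / INR (fact m).

(* S_{n,a}(x) = sum_{j=1}^n binom(n+a-j, n-j) sin(j x). *)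
Fixpoint Ssum (n : nat) (a x : R) (k : nat) : R :=
  match k with
  | O => 0
  | S j => Ssum n a x j + gbinom (n - S j) a * sin (INR (S j) * x)
  end.

Definition S_na (n : nat) (a x : R) : R := Ssum n a x n.

From Stdlib Require Import Reals Arith Lra Lia.
Open Scope R_scope.

(* The coefficients of S_{n,a} are the convolution of binom(m+a-2, m) with m+1,
   so S_{n,a} = sum_i binom(i+a-2, i) F_{n-i}, where
   F_m(x) = sum_{j=1}^m (m+1-j) sin(j x) = S_{m,1}(x) is a Fejer-type kernel.
   For a >= 1 the weights are nonnegative with leading weight 1, and
   2 (1 - cos x) F_m(x) = (m+1) sin x - sin((m+1) x) > 0 on (0, pi), whence
   S_{n,a} > 0.  For a < 1 already S_{2,a}(x) = sin x (a + 1 + 2 cos x) is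
   negative for x close to pi. *)

(* [sumR n f] = f 0 + ... + f (n-1); unlike [sum_f_R0] it can be empty. *)
Fixpoint sumR (n : nat) (f : nat -> R) : R :=
  match n with O => 0 | S k => sumR k f + f k end.

Lemma sumR_ext n f g :
  (forall i, (i < n)%nat -> f i = g i) -> sumR n f = sumR n g.
Proof.
  induction n as [|n IH]; intro Hfg; simpl; [reflexivity|].
  rewrite IH by (intros; apply Hfg; lia).
  rewrite Hfg by lia. reflexivity.
Qed.

Lemma sumR_add n f g : sumR n (fun i => f i + g i) = sumR n f + sumR n g.
Proof. induction n as [|n IH]; simpl; [ring | rewrite IH; ring]. Qed.

Lemma sumR_mult_l n c f : sumR n (fun i => c * f i) = c * sumR n f.
Proof. induction n as [|n IH]; simpl; [ring | rewrite IH; ring]. Qed.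

Lemma sumR_Sl n f : sumR (S n) f = f 0%nat + sumR n (fun j => f (S j)).
Proof. induction n as [|n IH]; simpl in *; [ring | rewrite IH; ring]. Qed.

Lemma sumR_rev n f : sumR n f = sumR n (fun j => f (n - S j)%nat).
Proof.
  induction n as [|n IH]; [reflexivity|].
  rewrite (sumR_Sl n (fun j => f (S n - S j)%nat)).
  simpl. rewrite Nat.sub_0_r, IH. ring.
Qed.

Lemma sumR_nonneg n f : (forall i, (i < n)%nat -> 0 <= f i) -> 0 <= sumR n f.
Proof.
  induction n as [|n IH]; intro Hf; simpl; [lra|].
  assert (0 <= sumR n f) by (apply IH; intros; apply Hf; lia).
  assert (0 <= f n) by (apply Hf; lia).
  lra.
Qed.

Lemma sumR_triangle_S n (h : nat -> nat -> R) :
  sumR (S n) (fun j => sumR (S n - j) (h j))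
  = sumR n (fun j => sumR (n - j) (h j)) + sumR (S n) (fun j => h j (n - j)%nat).
Proof.
  rewrite (sumR_ext (S n) _ (fun j => sumR (n - j) (h j) + h j (n - j)%nat)).
  - rewrite sumR_add; simpl; rewrite Nat.sub_diag; simpl; ring.
  - intros j Hj. replace (S n - j)%nat with (S (n - j)) by lia. reflexivity.
Qed.

Lemma sumR_triangle n (g : nat -> nat -> R) :
  sumR n (fun j => sumR (n - j) (fun i => g i j))
  = sumR n (fun i => sumR (n - i) (fun j => g i j)).
Proof.
  induction n as [|n IH]; [reflexivity|].
  rewrite (sumR_triangle_S n (fun j i => g i j)), (sumR_triangle_S n (fun i j => g i j)), IH.
  f_equal. rewrite sumR_rev. apply sumR_ext. intros i Hi.
  replace (n - (S n - S i))%nat with i by lia.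
  replace (S n - S i)%nat with (n - i)%nat by lia. reflexivity.
Qed.

Definition sin_poly (c : nat -> R) (n : nat) (x : R) : R :=
  sumR n (fun j => c (n - S j)%nat * sin (INR (S j) * x)).

Lemma S_na_sin_poly n a x : S_na n a x = sin_poly (fun m => gbinom m a) n x.
Proof.
  unfold S_na, sin_poly.
  assert (Hk : forall k,
    Ssum n a x k = sumR k (fun j => gbinom (n - S j) a * sin (INR (S j) * x))).
  { induction k as [|k IH]; simpl; [reflexivity | rewrite IH; reflexivity]. }
  apply Hk.
Qed.

Lemma sin_poly_conv (c d e : nat -> R) n x :
  (forall m, c m = sumR (S m) (fun i => d i * e (m - i)%nat)) ->
  sin_poly c n x = sumR n (fun i => d i * sin_poly e (n - i) x).
Proof.
  intro Hc. unfold sin_poly.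
  transitivity (sumR n (fun j => sumR (n - j)
     (fun i => d i * e (n - S j - i)%nat * sin (INR (S j) * x)))).
  { apply sumR_ext; intros j Hj. rewrite Hc.
    replace (S (n - S j)) with (n - j)%nat by lia.
    rewrite Rmult_comm, <- sumR_mult_l. apply sumR_ext; intros; ring. }
  rewrite sumR_triangle. apply sumR_ext; intros i Hi. rewrite <- sumR_mult_l.
  apply sumR_ext; intros j Hj.
  replace (n - S j - i)%nat with (n - i - S j)%nat by lia. ring.
Qed.

Lemma gbinom_0 b : gbinom 0 b = 1.
Proof. unfold gbinom; simpl; field. Qed.

Lemma rise_pred b m : rise (b - 1) (S m) = b * rise b m.
Proof.
  induction m as [|m IH]; [simpl; ring|].
  change (rise (b - 1) (S (S m))) with (rise (b - 1) (S m) * (b - 1 + INR (S (S m)))).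
  change (rise b (S m)) with (rise b m * (b + INR (S m))).
  rewrite IH, (S_INR (S m)). ring.
Qed.

Lemma gbinom_pascal b m : gbinom (S m) b = gbinom m b + gbinom (S m) (b - 1).
Proof.
  unfold gbinom. rewrite rise_pred.
  change (rise b (S m)) with (rise b m * (b + INR (S m))).
  rewrite fact_simpl, mult_INR.
  assert (0 < INR (fact m)) by apply INR_fact_lt_0.
  assert (0 < INR (S m)) by (apply lt_0_INR; lia).
  field. lra.
Qed.

Lemma gbinom_hockey_stick b m : gbinom m b = sumR (S m) (fun i => gbinom i (b - 1)).
Proof.
  induction m as [|m IH]; [simpl; rewrite !gbinom_0; ring|].
  rewrite gbinom_pascal, IH. reflexivity.
Qed.

Lemma gbinom_sub2_conv a m :
  gbinom m a = sumR (S m) (fun i => gbinom i (a - 2) * INR (S (m - i))).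
Proof.
  induction m as [|m IH]; [simpl; rewrite !gbinom_0; ring|].
  rewrite gbinom_pascal, IH, (gbinom_hockey_stick (a - 1)).
  replace (a - 1 - 1) with (a - 2) by ring.
  rewrite (sumR_ext (S (S m)) (fun i => gbinom i (a - 2) * INR (S (S m - i)))
       (fun i => gbinom i (a - 2) * INR (S m - i) + gbinom i (a - 2))).
  - rewrite sumR_add.
    change (sumR (S (S m)) (fun i => gbinom i (a - 2) * INR (S m - i)))
      with (sumR (S m) (fun i => gbinom i (a - 2) * INR (S m - i))
            + gbinom (S m) (a - 2) * INR (S m - S m)).
    rewrite Nat.sub_diag, Rmult_0_r, Rplus_0_r.
    rewrite (sumR_ext (S m) (fun i => gbinom i (a - 2) * INR (S m - i))
              (fun i => gbinom i (a - 2) * INR (S (m - i)))); [reflexivity|].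
    intros i Hi. replace (S m - i)%nat with (S (m - i)) by lia. reflexivity.
  - intros i Hi. replace (S (S m) - i)%nat with (S (S m - i)) by lia.
    rewrite S_INR. ring.
Qed.

Lemma rise_nonneg b m : -1 <= b -> 0 <= rise b m.
Proof.
  intro Hb. induction m as [|m IH]; [simpl; lra|].
  change (rise b (S m)) with (rise b m * (b + INR (S m))).
  apply Rmult_le_pos; [assumption|].
  pose proof (pos_INR m). rewrite S_INR. lra.
Qed.

Lemma gbinom_nonneg b m : -1 <= b -> 0 <= gbinom m b.
Proof.
  intro Hb. apply Rmult_le_pos; [apply rise_nonneg; assumption|].
  left. apply Rinv_0_lt_compat, INR_fact_lt_0.
Qed.

Lemma sin_sum_closed x k :
  2 * (1 - cos x) * sumR k (fun j => sin (INR (S j) * x))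
  = sin x + sin (INR k * x) - sin (INR (S k) * x).
Proof.
  induction k as [|k IH].
  - simpl. rewrite Rmult_0_l, sin_0, Rmult_1_l. ring.
  - change (sumR (S k) (fun j => sin (INR (S j) * x)))
      with (sumR k (fun j => sin (INR (S j) * x)) + sin (INR (S k) * x)).
    rewrite Rmult_plus_distr_l, IH.
    replace (INR (S (S k)) * x) with (INR (S k) * x + x) by (rewrite (S_INR (S k)); ring).
    replace (INR k * x) with (INR (S k) * x - x) by (rewrite (S_INR k); ring).
    rewrite sin_plus, sin_minus. ring.
Qed.

(* The weight [m - j] equals [sin_poly]'s [S (m - S j)] for [j < m], but
   vanishes at [j = m], which makes the induction step peel off cleanly. *)
Lemma fejer_closed x m :
  2 * (1 - cos x) * sumR m (fun j => INR (m - j) * sin (INR (S j) * x))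
  = INR (S m) * sin x - sin (INR (S m) * x).
Proof.
  induction m as [|m IH]; [simpl; replace (1 * x) with x by ring; ring|].
  rewrite (sumR_ext (S m) _
    (fun j => INR (m - j) * sin (INR (S j) * x) + sin (INR (S j) * x))).
  - rewrite sumR_add, Rmult_plus_distr_l, sin_sum_closed.
    change (sumR (S m) (fun j => INR (m - j) * sin (INR (S j) * x)))
      with (sumR m (fun j => INR (m - j) * sin (INR (S j) * x))
            + INR (m - m) * sin (INR (S m) * x)).
    rewrite Nat.sub_diag, Rmult_0_l, Rplus_0_r, IH, (S_INR (S m)). ring.
  - intros j Hj. replace (S m - j)%nat with (S (m - j)) by lia. rewrite S_INR. ring.
Qed.

Lemma Rabs_sin_mult_le x k : Rabs (sin (INR k * x)) <= INR k * Rabs (sin x).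
Proof.
  induction k as [|k IH].
  - simpl. rewrite Rmult_0_l, sin_0, Rabs_R0. lra.
  - rewrite S_INR, Rmult_plus_distr_r, Rmult_1_l, sin_plus.
    eapply Rle_trans; [apply Rabs_triang|]. rewrite !Rabs_mult.
    assert (Rabs (cos x) <= 1) by (apply Rabs_le, COS_bound).
    assert (Rabs (cos (INR k * x)) <= 1) by (apply Rabs_le, COS_bound).
    pose proof (Rabs_pos (sin (INR k * x))). pose proof (Rabs_pos (sin x)).
    pose proof (Rabs_pos (cos x)). pose proof (Rabs_pos (cos (INR k * x))).
    nra.
Qed.

Lemma Rabs_sin_mult_lt x k : 0 < x < PI -> (2 <= k)%nat ->
  Rabs (sin (INR k * x)) < INR k * sin x.
Proof.
  intros Hx Hk. destruct k as [|k]; [lia|].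
  pose proof (sin_gt_0 x (proj1 Hx) (proj2 Hx)) as Hsin.
  pose proof (Rabs_sin_mult_le x k) as Hle. rewrite (Rabs_right (sin x)) in Hle by lra.
  assert (1 <= INR k) by (apply (le_INR 1); lia).
  assert (Rabs (cos x) < 1).
  { pose proof (sin2_cos2 x). unfold Rsqr in *. apply Rabs_def1; nra. }
  assert (Rabs (cos (INR k * x)) <= 1) by (apply Rabs_le, COS_bound).
  rewrite S_INR, Rmult_plus_distr_r, Rmult_1_l, sin_plus.
  eapply Rle_lt_trans; [apply Rabs_triang|]. rewrite !Rabs_mult, (Rabs_right (sin x)) by lra.
  pose proof (Rabs_pos (sin (INR k * x))). pose proof (Rabs_pos (cos x)).
  pose proof (Rabs_pos (cos (INR k * x))).
  assert (Rabs (sin (INR k * x)) * Rabs (cos x) <= INR k * sin x * Rabs (cos x)).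
  { apply Rmult_le_compat_r; lra. }
  assert (INR k * sin x * Rabs (cos x) < INR k * sin x).
  { rewrite <- (Rmult_1_r (INR k * sin x)) at 2. apply Rmult_lt_compat_l; nra. }
  nra.
Qed.

Lemma fejer_pos x m : 0 < x < PI -> (1 <= m)%nat ->
  0 < sin_poly (fun l => INR (S l)) m x.
Proof.
  intros Hx Hm. unfold sin_poly.
  rewrite (sumR_ext m _ (fun j => INR (m - j) * sin (INR (S j) * x))).
  2:{ intros j Hj. replace (S (m - S j)) with (m - j)%nat by lia. reflexivity. }
  pose proof (fejer_closed x m).
  pose proof (Rabs_sin_mult_lt x (S m) Hx ltac:(lia)).
  pose proof (Rle_abs (sin (INR (S m) * x))).
  pose proof (sin_gt_0 x (proj1 Hx) (proj2 Hx)).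
  assert (cos x < 1) by (pose proof (sin2_cos2 x); unfold Rsqr in *; nra).
  nra.
Qed.

Lemma S_na_pos n a x : 1 <= a -> (1 <= n)%nat -> 0 < x < PI -> 0 < S_na n a x.
Proof.
  intros Ha Hn Hx.
  rewrite S_na_sin_poly, (sin_poly_conv (fun m => gbinom m a) (fun i => gbinom i (a - 2))
                     (fun l => INR (S l)) n x (gbinom_sub2_conv a)).
  destruct n as [|n]; [lia|].
  rewrite sumR_Sl, gbinom_0, Nat.sub_0_r, Rmult_1_l.
  assert (0 < sin_poly (fun l => INR (S l)) (S n) x) by (apply fejer_pos; auto; lia).
  assert (0 <= sumR n (fun i =>
            gbinom (S i) (a - 2) * sin_poly (fun l => INR (S l)) (S n - S i) x)).
  { apply sumR_nonneg. intros i Hi. apply Rmult_le_pos.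
    - apply gbinom_nonneg; lra.
    - left. apply fejer_pos; auto; lia. }
  lra.
Qed.

Lemma S_na_2 a x : S_na 2 a x = sin x * (a + 1 + 2 * cos x).
Proof.
  unfold S_na. simpl. rewrite gbinom_0.
  replace ((1 + 1) * x) with (2 * x) by ring. rewrite sin_2a, Rmult_1_l.
  unfold gbinom. simpl. field.
Qed.

Lemma S_na_2_neg a : a < 1 -> exists x, 0 < x < PI /\ S_na 2 a x < 0.
Proof.
  intro Ha. set (y := -1 + Rmin 1 ((1 - a) / 4)).
  assert (Rmin 1 ((1 - a) / 4) <= 1) by apply Rmin_l.
  assert (Rmin 1 ((1 - a) / 4) <= (1 - a) / 4) by apply Rmin_r.
  assert (0 < Rmin 1 ((1 - a) / 4)) by (apply Rmin_glb_lt; lra).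
  assert (Hy : -1 < y < 1) by (unfold y; lra).
  exists (acos y). pose proof (acos_bound_lt y Hy) as Hacos.
  split; [exact Hacos|].
  rewrite S_na_2, cos_acos by lra.
  pose proof (sin_gt_0 _ (proj1 Hacos) (proj2 Hacos)).
  assert (a + 1 + 2 * y < 0) by (unfold y; lra).
  nra.
Qed.

Theorem theorem3p4 (a : R) :
  (forall (n : nat) (x : R), (1 <= n)%nat -> 0 < x < PI -> S_na n a x > 0)
  <-> 1 <= a.
Proof.
  split.
  - intro Hpos. apply Rnot_lt_le. intro Ha.
    destruct (S_na_2_neg a Ha) as (x & Hx & Hneg).
    specialize (Hpos 2%nat x ltac:(lia) Hx). lra.
  - intros Ha n x Hn Hx. apply S_na_pos; assumption.
Qed.
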